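(* Consider a robust constrained MDP as described in the context, and assume that the robust constrained problem $\min_{\pi} J_{c_0}^{\pi}$ subject to $J_{c_n}^{\pi}\le b_n$ for $n=1,\dots,K$ admits an optimal (in particular feasible) policy $\pi^*$. Let $\epsilon>0$, set $\lambda = 2H/\epsilon$ with $H=1/(1-\gamma)$, and let $\hat\pi^*$ be an optimal policy of the surrogate problem $$\min_{\pi}\ \max\Big\{ J_{c_0}^{\pi}/\lambda,\ \max_{n\in\{1,\dots,K\}} \big[J_{c_n}^{\pi}-b_n\big]\Big\}.$$ Then $J_{c_0}^{\hat\pi^*}\le J_{c_0}^{\pi^*}$, and $\hat\pi^*$ violates the constraints by at most $\epsilon$, i.e. $\max_{n\in\{1,\dots,K\}}\big[J_{c_n}^{\hat\pi^*}-b_n\big]\le \epsilon$.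
   Context: Setting: a finite state space $\mathcal S$ (with $S=|\mathcal S|$), finite action space $\mathcal A$, discount factor $\gamma\in[0,1)$, cost functions $c_0,c_1,\dots,c_K:\mathcal S\times\mathcal A\to[0,1]$ ($c_0$ is the objective cost, $c_1,\dots,c_K$ constraint costs), thresholds $b_1,\dots,b_K\in\mathbb R$, and an initial state distribution $\mu$. A nominal transition kernel $P_0$ is given, and the uncertainty set is $(s,a)$-rectangular: $\mathbb P=\bigotimes_{(s,a)}\mathbb P_{(s,a)}$ with $\mathbb P_{(s,a)}=\{P\in\Delta(\mathcal S): D(P,P_0(\cdot|s,a))\le \rho\}$ for a distance $D$ between distributions and radius $\rho\ge 0$. For a (Markovian, stochastic) policy $\pi$ and kernel $P$, $J_{c_i}^{\pi,P}=\mathbb E_{s_0\sim\mu,\pi,P}\big[\sum_{t\ge 0}\gamma^t c_i(s_t,a_t)\big]$, and the robust value is $J_{c_i}^{\pi}=\max_{P\in\mathbb P}J_{c_i}^{\pi,P}$. Note $0\le J_{c_i}^{\pi}\le H:=1/(1-\gamma)$. Policies range over all Markovian stochastic policies. *)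

From HB Require Import structures.
From mathcomp Require Import all_boot all_order all_algebra.
From mathcomp Require Import all_classical all_reals all_analysis.
Import Order.TTheory GRing.Theory Num.Theory.
Local Open Scope ring_scope.
Local Open Scope classical_set_scope.

Set Implicit Arguments.
Unset Strict Implicit.
Unset Printing Implicit Defensive.

Section RMDP.
Variables (R : realType) (S A : finType).

Definition is_dist (T : finType) (p : T -> R) : Prop :=
  (forall x, 0 <= p x) /\ \sum_(x : T) p x = 1.

(* transition kernels P(s'|s,a) = P s a s' and Markovian stochastic
   (stationary) policies pi(a|s) = pi s a *)
Definition tkernel := S -> A -> S -> R.
Definition policy := S -> A -> R.
Definition is_kernel (P : tkernel) : Prop := forall s a, is_dist (P s a).
Definition is_policy (pi : policy) : Prop := forall s, is_dist (pi s).

Fixpoint state_dist (mu : S -> R) (pi : policy) (P : tkernel) (t : nat) : S -> R :=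
  match t with
  | 0 => mu
  | t'.+1 => fun s' => \sum_(s : S) state_dist mu pi P t' s *
                        \sum_(a : A) pi s a * P s a s'
  end.

Definition disc_cost (gamma : R) (mu : S -> R) (c : S -> A -> R)
    (pi : policy) (P : tkernel) : R :=
  limn (fun N => \sum_(0 <= t < N) (gamma ^+ t *
     \sum_(s : S) state_dist mu pi P t s * \sum_(a : A) pi s a * c s a)).

Definition unc_set (D : (S -> R) -> (S -> R) -> R) (rho : R) (P0 : tkernel)
  : set tkernel :=
  [set P | is_kernel P /\ forall s a, D (P s a) (P0 s a) <= rho].

(* robust value J_c^pi = max_{P in unc_set} J_c^{pi,P} (written as a sup) *)
Definition robust_cost (gamma : R) (mu : S -> R) (D : (S -> R) -> (S -> R) -> R)
    (rho : R) (P0 : tkernel) (c : S -> A -> R) (pi : policy) : R :=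
  sup [set disc_cost gamma mu c pi P | P in unc_set D rho P0].

End RMDP.

From HB Require Import structures.
From mathcomp Require Import all_boot all_order all_algebra.
From mathcomp Require Import all_classical all_reals all_analysis.
Import Order.TTheory GRing.Theory Num.Theory.
From mathcomp Require Import ring lra.

Set Implicit Arguments.
Unset Strict Implicit.
Unset Printing Implicit Defensive.

Local Open Scope ring_scope.
Local Open Scope classical_set_scope.

(* All robust values lie in [0, H].  At an optimum pistar of the constrained
   problem every constraint term is nonpositive, so the surrogate objective of
   pistar is just J_c0(pistar)/lambda.  Optimality of pihat for the surrogate
   therefore bounds J_c0(pihat)/lambda and every constraint violation of pihat
   by J_c0(pistar)/lambda <= H/lambda = eps/2. *)

Lemma penalized_max_le (R : realFieldType) (I : finType) (lambda x y : R)
    (f g : I -> R) :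
  0 < lambda -> 0 <= y -> (forall i, g i <= 0) ->
  \big[Num.max/x / lambda]_i f i <= \big[Num.max/y / lambda]_i g i ->
  x <= y /\ forall i, f i <= y / lambda.
Proof.
move=> lambda_gt0 y_ge0 g_le0.
rewrite [X in _ <= X -> _]bigmax_eq_id => [/bigmax_leP[xy fy]|i _]; last first.
  by rewrite (le_trans (g_le0 i))// divr_ge0// ltW.
by split=> [|i]; [rewrite -(ler_pM2r (_ : 0 < lambda^-1)) ?invr_gt0 | exact: fy].
Qed.

Lemma sup_ge0_le (R : realType) (E : set R) (h : R) :
  0 <= h -> (forall y, E y -> 0 <= y <= h) -> 0 <= sup E <= h.
Proof.
move=> h_ge0 E0h; have [->|/set0P[y Ey]] := eqVneq E set0.
  by rewrite sup0 lexx.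
have /andP[y_ge0 _] := E0h y Ey.
apply/andP; split.
  by rewrite (le_trans y_ge0)// ub_le_sup//; exists h => z /E0h /andP[].
by apply: ge_sup; [exists y | move=> z /E0h /andP[]].
Qed.

Section DiscountedSums.
Variable R : realType.

Lemma geometric_partial_sum_le (gamma : R) N : 0 <= gamma < 1 ->
  \sum_(0 <= t < N) gamma ^+ t <= (1 - gamma)^-1.
Proof.
move=> /andP[gamma_ge0 gamma_lt1].
have := geometric_seriesE 1 (negbT (lt_eqF gamma_lt1)); rewrite funeqE => /(_ N).
rewrite seriesEnat /= (eq_bigr (fun t => gamma ^+ t)) => [->|t _]; last first.
  by rewrite /geometric mul1r.
rewrite mul1r -[leRHS]mul1r ler_pM2r ?invr_gt0 ?subr_gt0// gerBl.
exact: exprn_ge0.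
Qed.

Lemma discounted_sum_ge0_le (gamma : R) (x : nat -> R) : 0 <= gamma < 1 ->
  (forall t, 0 <= x t <= 1) ->
  0 <= limn (fun N => \sum_(0 <= t < N) gamma ^+ t * x t) <= (1 - gamma)^-1.
Proof.
move=> gamma01 x01; have /andP[gamma_ge0 _] := gamma01.
set u := fun N => _.
have term_ge0 t : 0 <= gamma ^+ t * x t.
  by rewrite mulr_ge0 ?exprn_ge0//; case/andP: (x01 t).
have u_le N : u N <= (1 - gamma)^-1.
  apply: le_trans _ (geometric_partial_sum_le N gamma01).
  apply: ler_sum => t _; rewrite ler_piMr ?exprn_ge0//.
  by case/andP: (x01 t).
have u_ge0 N : 0 <= u N by exact: sumr_ge0.
have u_cvg : cvgn u.
  apply: nondecreasing_is_cvgn; last by exists (1 - gamma)^-1 => _ [n _ <-].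
  by apply/nondecreasing_seqP => n; rewrite /u big_nat_recr//= lerDl.
apply/andP; split; [apply: limr_ge | apply: limr_le] => //; exact: nearW.
Qed.

End DiscountedSums.

Section RobustCostBounds.
Variables (R : realType) (S A : finType).

Lemma dist_mean_in01 (T : finType) (p x : T -> R) : is_dist p ->
  (forall t, 0 <= x t <= 1) -> 0 <= \sum_t p t * x t <= 1.
Proof.
move=> [p_ge0 p_sum1] x01; apply/andP; split.
  by apply: sumr_ge0 => t _; rewrite mulr_ge0//; case/andP: (x01 t).
rewrite -p_sum1; apply: ler_sum => t _; rewrite ler_piMr//.
by case/andP: (x01 t).
Qed.

Lemma is_dist_state_dist (mu : S -> R) (pi : policy R S A) (P : tkernel R S A)
    t : is_dist mu -> is_policy pi -> is_kernel P ->
  is_dist (state_dist mu pi P t).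
Proof.
move=> mu_dist pi_dist P_dist; elim: t => [|t [d_ge0 d_sum1]] //=; split.
  move=> s'; apply: sumr_ge0 => s _; rewrite mulr_ge0//.
  apply: sumr_ge0 => a _; rewrite mulr_ge0//; first by case: (pi_dist s).
  by case: (P_dist s a).
rewrite exchange_big /= -d_sum1; apply: eq_bigr => s _.
rewrite -mulr_sumr exchange_big /= -[RHS]mulr1; congr (_ * _).
case: (pi_dist s) => _ <-; apply: eq_bigr => a _.
by rewrite -mulr_sumr; case: (P_dist s a) => _ ->; rewrite mulr1.
Qed.

Variables (gamma : R) (mu : S -> R) (c : S -> A -> R) (pi : policy R S A).
Hypotheses (gamma01 : 0 <= gamma < 1) (c01 : forall s a, 0 <= c s a <= 1).
Hypotheses (mu_dist : is_dist mu) (pi_dist : is_policy pi).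

Lemma disc_cost_ge0_le (P : tkernel R S A) : is_kernel P ->
  0 <= disc_cost gamma mu c pi P <= (1 - gamma)^-1.
Proof.
move=> P_kernel; apply: discounted_sum_ge0_le => // t.
apply: dist_mean_in01; first exact: is_dist_state_dist.
by move=> s; apply: dist_mean_in01.
Qed.

(* Nothing relates D to P0, so the uncertainty set may be empty; its sup is
   then 0. *)
Lemma robust_cost_ge0_le D rho (P0 : tkernel R S A) :
  0 <= robust_cost gamma mu D rho P0 c pi <= (1 - gamma)^-1.
Proof.
apply: sup_ge0_le; first by rewrite invr_ge0 subr_ge0; case/andP: gamma01 => _ /ltW.
by move=> _ [P [P_kernel _] <-]; apply: disc_cost_ge0_le.
Qed.

End RobustCostBounds.

Theorem proposition1 (R : realType) (S A : finType) (K : nat) (gamma : R)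
  (c0 : S -> A -> R) (c : 'I_K -> S -> A -> R) (b : 'I_K -> R) (mu : S -> R)
  (P0 : tkernel R S A) (D : (S -> R) -> (S -> R) -> R) (rho : R)
  (hgamma : 0 <= gamma < 1)
  (hc0 : forall s a, 0 <= c0 s a <= 1)
  (hc : forall n s a, 0 <= c n s a <= 1)
  (hmu : is_dist mu) (hP0 : is_kernel P0) (hrho : 0 <= rho)
  (pistar : policy R S A) (eps : R) (pihat : policy R S A) :
  let J := robust_cost gamma mu D rho P0 in
  let H := (1 - gamma)^-1 in
  let lambda := 2 * H / eps in
  let obj (pi : policy R S A) :=
    \big[Num.max/ J c0 pi / lambda]_(n < K) (J (c n) pi - b n) in
  (* pistar is an optimal (feasible) policy of the robust constrained problem *)
  is_policy pistar ->
  (forall n, J (c n) pistar <= b n) ->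
  (forall pi, is_policy pi -> (forall n, J (c n) pi <= b n) ->
     J c0 pistar <= J c0 pi) ->
  0 < eps ->
  (* pihat is an optimal policy of the surrogate problem *)
  is_policy pihat ->
  (forall pi, is_policy pi -> obj pihat <= obj pi) ->
  J c0 pihat <= J c0 pistar /\ (forall n, J (c n) pihat - b n <= eps).
Proof.
move=> J H lambda obj pistar_policy pistar_feasible _ eps_gt0 _ pihat_opt.
have H_gt0 : 0 < H by rewrite invr_gt0 subr_gt0; case/andP: hgamma.
have lambda_gt0 : 0 < lambda by rewrite divr_gt0 ?mulr_gt0.
have /andP[Jstar_ge0 Jstar_leH] : 0 <= J c0 pistar <= H.
  exact: robust_cost_ge0_le.
have constraint_le0 n : J (c n) pistar - b n <= 0 by rewrite subr_le0.
have [-> viol_le] := penalized_max_le lambda_gt0 Jstar_ge0 constraint_le0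
  (pihat_opt _ pistar_policy).
split=> // n; apply: le_trans (viol_le n) _.
have H_over_lambda : H / lambda = eps / 2.
  by rewrite /lambda invf_div; field; rewrite gt_eqF.
have lambdaV_ge0 : 0 <= lambda^-1 by rewrite invr_ge0 ltW.
apply: le_trans (ler_wpM2r lambdaV_ge0 Jstar_leH) _.
by rewrite H_over_lambda; lra.
Qed.
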